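(* For all $\alpha,\beta\ge 0$ one has $I(\alpha,\beta)<\sqrt{\pi/2}$, and $\sup_{\alpha,\beta\ge 0}I(\alpha,\beta)=\lim_{t\to+\infty}I(t,0)=\sqrt{\pi/2}$.
   Context: For $\alpha,\beta\ge 0$ define $I(\alpha,\beta)=\exp\left(-\frac{\alpha\beta}{2}\right)\int_{-\alpha}^{\beta}\exp\left(-\frac{\sigma^2}{2}\right)d\sigma$. *)

From Stdlib Require Import Reals.
From Coquelicot Require Import Coquelicot.
Open Scope R_scope.

Definition I (alpha beta : R) : R :=
  exp (- (alpha * beta) / 2) * RInt (fun s => exp (- (s ^ 2) / 2)) (- alpha) beta.

(* Feynman's trick: with F(t) = int_0^1 exp(-t^2 (1 + x^2) / 2) / (1 + x^2) dx, the sum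
   (int_0^t exp(-s^2/2) ds)^2 + 2 F(t) has zero derivative and equals 2 atan 1 = pi/2 at
   t = 0.  Since 0 < F(t) <= exp(-t^2/2), the integral int_0^t exp(-s^2/2) ds = I(t,0)
   stays below sqrt(pi/2) and tends to it.
   For general alpha, beta write [-alpha, beta] = m + [-r, r] with midpoint m and
   half-length r, so that r^2 = alpha beta + m^2.  Folding about m, with
   g(s) = exp(-s^2/2),
     exp(-alpha beta/2) (g(m+y) + g(m-y)) = 2 exp(-(y^2+r^2)/2) cosh(m y)
                                         <= 2 exp(-(y^2+r^2)/2) cosh(r y) = g(r+y) + g(r-y),
   hence I(alpha, beta) <= int_0^(alpha+beta) exp(-s^2/2) ds. *)

From Stdlib Require Import Reals Lra.
From Coquelicot Require Import Coquelicot.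
Open Scope R_scope.

Lemma exp_le_exp x y : x <= y -> exp x <= exp y.
Proof.
  intros [Hlt | ->]; [left; apply exp_increasing; exact Hlt | right; reflexivity].
Qed.

Lemma cosh_le_of_abs_le a b : Rabs b <= Rabs a -> cosh b <= cosh a.
Proof.
  assert (cosh_abs : forall x, cosh x = cosh (Rabs x)).
  { intros x; unfold cosh, Rabs; destruct (Rcase_abs x); [rewrite Ropp_involutive|]; field. }
  intros Hba; rewrite (cosh_abs a), (cosh_abs b); unfold cosh.
  set (p := Rabs a) in *; set (q := Rabs b) in *.
  assert (Hq : 0 <= q) by apply Rabs_pos.
  assert (factor : exp p + exp (- p) - (exp q + exp (- q))
                   = (exp p - exp q) * (1 - exp (- p + - q))).
  { rewrite exp_plus.
    assert (Ep : exp p * exp (- p) = 1) by (rewrite <- exp_plus, Rplus_opp_r; apply exp_0).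
    assert (Eq : exp q * exp (- q) = 1) by (rewrite <- exp_plus, Rplus_opp_r; apply exp_0).
    replace ((exp p - exp q) * (1 - exp (- p) * exp (- q)))
      with (exp p - exp q - (exp p * exp (- p)) * exp (- q) + (exp q * exp (- q)) * exp (- p))
      by ring.
    rewrite Ep, Eq; ring. }
  assert (0 <= (exp p - exp q) * (1 - exp (- p + - q))).
  { apply Rmult_le_pos.
    - assert (exp q <= exp p) by (apply exp_le_exp; exact Hba); lra.
    - assert (exp (- p + - q) <= exp 0) by (apply exp_le_exp; lra).
      rewrite exp_0 in *; lra. }
  lra.
Qed.

Lemma ex_RInt_of_ex_derive (f : R -> R) :
  (forall x, ex_derive f x) -> forall a b, ex_RInt f a b.
Proof.
  intros Hf a b; apply (ex_RInt_continuous (V := R_CompleteNormedModule)); intros x _.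
  apply (ex_derive_continuous (K := R_AbsRing) (V := R_NormedModule)), Hf.
Qed.

Lemma RInt_shift (f : R -> R) (c a b : R) :
  ex_RInt f a b -> RInt (fun y => f (y + c)) (a - c) (b - c) = RInt f a b.
Proof.
  intros Hf.
  rewrite (RInt_ext _ (fun y => scal 1 (f (1 * y + c)))).
  - rewrite (RInt_comp_lin (V := R_CompleteNormedModule)); f_equal; try ring.
    replace (1 * (a - c) + c) with a by ring; replace (1 * (b - c) + c) with b by ring.
    exact Hf.
  - intros y _; unfold scal; simpl; unfold mult; simpl; rewrite !Rmult_1_l; reflexivity.
Qed.

Lemma is_RInt_reflect (f : R -> R) (a b : R) :
  ex_RInt f (- b) (- a) -> is_RInt (fun y => f (- y)) a b (RInt f (- b) (- a)).
Proof.
  intros Hf.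
  assert (Hf' : ex_RInt f (- a) (- b)) by (apply (ex_RInt_swap (V := R_CompleteNormedModule)), Hf).
  apply (is_RInt_ext (fun y => opp (opp (f (- y))))); [intros; apply opp_opp|].
  rewrite <- (opp_RInt_swap (V := R_CompleteNormedModule) f (- a) (- b) Hf').
  apply (is_RInt_comp_opp (V := R_NormedModule) (fun x => opp (f x))).
  apply (is_RInt_opp (V := R_NormedModule)), (RInt_correct (V := R_CompleteNormedModule)), Hf'.
Qed.

Lemma RInt_even (f : R -> R) (a : R) :
  (forall y, f (- y) = f y) -> ex_RInt f (- a) 0 -> RInt f (- a) 0 = RInt f 0 a.
Proof.
  intros Heven Hf.
  assert (Hreflect := is_RInt_reflect f 0 a); rewrite Ropp_0 in Hreflect.
  rewrite <- (is_RInt_unique _ _ _ _ (Hreflect Hf)).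
  apply RInt_ext; intros; apply Heven.
Qed.

Lemma RInt_fold (f : R -> R) (a : R) :
  ex_RInt f (- a) 0 -> ex_RInt f 0 a ->
  RInt f (- a) a = RInt (fun y => f y + f (- y)) 0 a.
Proof.
  intros Hneg Hpos.
  assert (Hreflect := is_RInt_reflect f 0 a); rewrite Ropp_0 in Hreflect.
  specialize (Hreflect Hneg).
  rewrite (RInt_plus (V := R_CompleteNormedModule) f (fun y => f (- y)));
    [| exact Hpos | exists (RInt f (- a) 0); exact Hreflect].
  rewrite (is_RInt_unique _ _ _ _ Hreflect).
  rewrite <- (RInt_Chasles (V := R_CompleteNormedModule) f (- a) 0 a) by assumption.
  unfold plus; simpl; ring.
Qed.

Lemma is_derive_const_zero (f : R -> R) :
  (forall t, is_derive f t 0) -> forall x y, f x = f y.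
Proof.
  intros Hf x y.
  destruct (Rtotal_order x y) as [Hxy | [-> | Hyx]]; [| reflexivity |].
  - apply (eq_is_derive (V := R_NormedModule)); [intros; apply Hf | exact Hxy].
  - symmetry; apply (eq_is_derive (V := R_NormedModule)); [intros; apply Hf | exact Hyx].
Qed.

Lemma is_lub_of_is_lim (E : R -> Prop) (f : R -> R) (l : R) :
  (forall y, E y -> y <= l) -> (forall t, 0 <= t -> E (f t)) ->
  is_lim f p_infty l -> is_lub E l.
Proof.
  intros Hub Hf Hlim; split; [exact Hub|].
  intros M HM.
  apply (is_lim_le_loc f (fun _ => M) p_infty l M); [| exact Hlim | apply is_lim_const].
  exists 0; intros t Ht; apply HM, Hf; lra.
Qed.

Definition gauss (s : R) : R := exp (- (s ^ 2) / 2).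

Definition gauss_int (x : R) : R := RInt gauss 0 x.

Lemma gauss_pos s : 0 < gauss s.
Proof. apply exp_pos. Qed.

Lemma gauss_opp s : gauss (- s) = gauss s.
Proof. unfold gauss; f_equal; field. Qed.

Lemma ex_derive_gauss s : ex_derive gauss s.
Proof. unfold gauss; auto_derive; trivial. Qed.

Lemma continuous_gauss s : continuous gauss s.
Proof. apply (ex_derive_continuous (K := R_AbsRing) (V := R_NormedModule)), ex_derive_gauss. Qed.

Lemma ex_RInt_gauss a b : ex_RInt gauss a b.
Proof. apply ex_RInt_of_ex_derive, ex_derive_gauss. Qed.

Lemma is_derive_gauss_int x : is_derive gauss_int x (gauss x).
Proof.
  apply is_derive_RInt with (a := 0); [| apply continuous_gauss].
  apply filter_forall; intros y; apply (RInt_correct (V := R_CompleteNormedModule)), ex_RInt_gauss.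
Qed.

Lemma gauss_int_nonneg t : 0 <= t -> 0 <= gauss_int t.
Proof. intros Ht; apply RInt_ge_0; [exact Ht | apply ex_RInt_gauss | intros; left; apply gauss_pos]. Qed.

Lemma is_lim_gauss : is_lim gauss p_infty 0.
Proof.
  apply (is_lim_comp exp (fun t => - (t ^ 2) / 2) p_infty 0 m_infty).
  - apply is_lim_exp_m.
  - apply is_lim_le_m_loc with (f := fun t => - t).
    + exists 2; intros t Ht; nra.
    + apply (is_lim_opp (fun t => t) p_infty p_infty), is_lim_id.
  - exists 0; intros; discriminate.
Qed.

Definition feynman_kernel (t x : R) : R := exp (- (t ^ 2 * (1 + x ^ 2)) / 2) / (1 + x ^ 2).

Definition feynman (t : R) : R := RInt (feynman_kernel t) 0 1.

Lemma one_plus_sqr_pos x : 0 < 1 + x ^ 2.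
Proof. nra. Qed.

Lemma continuous_feynman_kernel t x : continuous (feynman_kernel t) x.
Proof.
  apply (ex_derive_continuous (K := R_AbsRing) (V := R_NormedModule)).
  unfold feynman_kernel; auto_derive; generalize (one_plus_sqr_pos x); lra.
Qed.

Lemma Derive_feynman_kernel t x :
  Derive (fun u => feynman_kernel u x) t = - t * exp (- (t ^ 2 * (1 + x ^ 2)) / 2).
Proof.
  apply is_derive_unique; unfold feynman_kernel; auto_derive.
  - generalize (one_plus_sqr_pos x); lra.
  - replace (- (t * (t * 1) * (1 + x * (x * 1))) * / 2) with (- (t ^ 2 * (1 + x ^ 2)) / 2)
      by (unfold Rdiv; ring).
    field; generalize (one_plus_sqr_pos x); lra.
Qed.

Lemma continuity_2d_Derive_feynman_kernel t x :
  continuity_2d_pt (fun u v => Derive (fun z => feynman_kernel z v) u) t x.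
Proof.
  apply continuity_2d_pt_ext with (f := fun u v => - u * exp (- (u ^ 2 * (1 + v ^ 2)) / 2)).
  { intros; symmetry; apply Derive_feynman_kernel. }
  apply continuity_2d_pt_mult; [apply continuity_2d_pt_opp, continuity_2d_pt_id1|].
  apply continuity_1d_2d_pt_comp with (f := exp) (g := fun u v => - (u ^ 2 * (1 + v ^ 2)) / 2);
    [apply derivable_continuous_pt, derivable_pt_exp|].
  apply continuity_2d_pt_ext with (f := fun u v => (u * u * (1 + v * v)) * (- / 2));
    [intros; field|].
  apply continuity_2d_pt_mult; [| apply continuity_2d_pt_const].
  apply continuity_2d_pt_mult; [apply continuity_2d_pt_mult; apply continuity_2d_pt_id1|].
  apply continuity_2d_pt_plus; [apply continuity_2d_pt_const|].
  apply continuity_2d_pt_mult; apply continuity_2d_pt_id2.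
Qed.

(* The substitution s = t x turns the t-derivative of the kernel into a Gaussian integral. *)
Lemma RInt_Derive_feynman_kernel t :
  RInt (fun x => Derive (fun u => feynman_kernel u x) t) 0 1 = - gauss t * gauss_int t.
Proof.
  rewrite (RInt_ext _ (fun x => scal (- gauss t) (scal t (gauss (t * x + 0))))).
  - rewrite (RInt_scal (V := R_CompleteNormedModule)).
    + rewrite (RInt_comp_lin (V := R_CompleteNormedModule)) by apply ex_RInt_gauss.
      unfold gauss_int; rewrite Rmult_0_r, Rplus_0_r, Rmult_1_r, Rplus_0_r; reflexivity.
    + apply ex_RInt_of_ex_derive; intros x.
      unfold gauss, scal; simpl; unfold mult; simpl; auto_derive; trivial.
  - intros x _; rewrite Derive_feynman_kernel; unfold gauss.
    replace (- (t ^ 2 * (1 + x ^ 2)) / 2) with (- (t ^ 2) / 2 + - ((t * x + 0) ^ 2) / 2) by field.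
    rewrite exp_plus; unfold scal; simpl; unfold mult; simpl; ring.
Qed.

Lemma is_derive_feynman t : is_derive feynman t (- gauss t * gauss_int t).
Proof.
  rewrite <- RInt_Derive_feynman_kernel; unfold feynman.
  apply is_derive_RInt_param.
  - apply filter_forall; intros u x _; unfold feynman_kernel; auto_derive.
    generalize (one_plus_sqr_pos x); lra.
  - intros x _; apply continuity_2d_Derive_feynman_kernel.
  - apply filter_forall; intros u; apply (ex_RInt_continuous (V := R_CompleteNormedModule)).
    intros; apply continuous_feynman_kernel.
Qed.

Lemma feynman_0 : feynman 0 = PI / 4.
Proof.
  unfold feynman; rewrite (RInt_ext _ (fun x => / (1 + x²))).
  - apply is_RInt_unique.
    replace (PI / 4) with (minus (atan 1) (atan 0))
      by (rewrite atan_1, atan_0; unfold minus, plus, opp; simpl; ring).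
    apply (is_RInt_derive (V := R_CompleteNormedModule)); intros x _; [apply is_derive_atan|].
    apply (ex_derive_continuous (K := R_AbsRing) (V := R_NormedModule)).
    auto_derive; unfold Rsqr; nra.
  - intros x _; unfold feynman_kernel, Rsqr.
    replace (- (0 ^ 2 * (1 + x ^ 2)) / 2) with 0 by field.
    rewrite exp_0; unfold Rdiv; rewrite Rmult_1_l; f_equal; ring.
Qed.

Lemma gauss_int_sqr_add_feynman t : gauss_int t ^ 2 + 2 * feynman t = PI / 2.
Proof.
  assert (flat : forall u, is_derive (fun u => gauss_int u ^ 2 + 2 * feynman u) u 0).
  { intros u.
    replace 0 with (plus (INR 2 * gauss u * gauss_int u ^ 1) (scal 2 (- gauss u * gauss_int u)))
      by (unfold plus, scal; simpl; unfold mult; simpl; ring).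
    apply (is_derive_plus (K := R_AbsRing) (fun u => gauss_int u ^ 2) (fun u => scal 2 (feynman u))).
    - apply is_derive_pow, is_derive_gauss_int.
    - apply is_derive_scal, is_derive_feynman. }
  rewrite (is_derive_const_zero _ flat t 0), feynman_0.
  unfold gauss_int; rewrite RInt_point; unfold zero; simpl; field.
Qed.

Lemma feynman_pos t : 0 < feynman t.
Proof.
  apply RInt_gt_0; [lra | | intros; apply continuous_feynman_kernel].
  intros x _; apply Rdiv_lt_0_compat; [apply exp_pos | apply one_plus_sqr_pos].
Qed.

Lemma feynman_le_gauss t : feynman t <= gauss t.
Proof.
  apply Rle_trans with (RInt (fun _ => gauss t) 0 1).
  - apply RInt_le; [lra | | apply (ex_RInt_const (V := R_CompleteNormedModule)) |].
    + apply (ex_RInt_continuous (V := R_CompleteNormedModule)); intros; apply continuous_feynman_kernel.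
    + intros x _; unfold feynman_kernel, gauss.
      assert (Hexp : exp (- (t ^ 2 * (1 + x ^ 2)) / 2) <= exp (- (t ^ 2) / 2)).
      { apply exp_le_exp; assert (0 <= t ^ 2 * x ^ 2) by (apply Rmult_le_pos; nra); lra. }
      assert (Hpos := exp_pos (- (t ^ 2 * (1 + x ^ 2)) / 2)).
      apply Rle_trans with (2 := Hexp).
      apply Rmult_le_reg_r with (1 + x ^ 2); [apply one_plus_sqr_pos|].
      unfold Rdiv; rewrite Rmult_assoc, Rinv_l by (generalize (one_plus_sqr_pos x); lra).
      nra.
  - rewrite RInt_const; unfold scal; simpl; unfold mult; simpl; lra.
Qed.

Lemma gauss_int_eq_sqrt t : 0 <= t -> gauss_int t = sqrt (PI / 2 - 2 * feynman t).
Proof.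
  intros Ht; rewrite <- (gauss_int_sqr_add_feynman t).
  replace (gauss_int t ^ 2 + 2 * feynman t - 2 * feynman t) with (gauss_int t ^ 2) by ring.
  symmetry; apply sqrt_pow2, gauss_int_nonneg, Ht.
Qed.

Lemma gauss_int_lt t : 0 <= t -> gauss_int t < sqrt (PI / 2).
Proof.
  intros Ht; rewrite gauss_int_eq_sqrt by exact Ht.
  apply sqrt_lt_1_alt; split; [| generalize (feynman_pos t); lra].
  rewrite <- (gauss_int_sqr_add_feynman t); generalize (pow2_ge_0 (gauss_int t)); lra.
Qed.

Lemma is_lim_gauss_int : is_lim gauss_int p_infty (sqrt (PI / 2)).
Proof.
  apply is_lim_ext_loc with (f := fun t => sqrt (PI / 2 - 2 * feynman t)).
  { exists 0; intros t Ht; symmetry; apply gauss_int_eq_sqrt; lra. }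
  apply is_lim_comp_continuous; [| apply continuous_sqrt].
  replace (PI / 2) with (PI / 2 - 2 * 0) at 2 by ring.
  apply (is_lim_minus (fun _ => PI / 2) (fun t => 2 * feynman t) p_infty (PI / 2) (2 * 0));
    [apply is_lim_const | | unfold is_Rbar_minus, is_Rbar_plus; simpl; do 2 f_equal; ring].
  apply (is_lim_scal_l feynman 2 p_infty 0).
  apply is_lim_le_le_loc with (f := fun _ => 0) (g := gauss);
    [| apply is_lim_const | apply is_lim_gauss].
  exists 0; intros t _; split; [left; apply feynman_pos | apply feynman_le_gauss].
Qed.

Lemma gauss_add_shift_opp y r :
  gauss (y + r) + gauss (- y + r) = 2 * exp (- (y ^ 2 + r ^ 2) / 2) * cosh (r * y).
Proof.
  unfold gauss, cosh.
  replace (- ((y + r) ^ 2) / 2) with (- (y ^ 2 + r ^ 2) / 2 + - (r * y)) by field.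
  replace (- ((- y + r) ^ 2) / 2) with (- (y ^ 2 + r ^ 2) / 2 + r * y) by field.
  rewrite !exp_plus; field.
Qed.

Lemma gauss_pair_le c m r y :
  r ^ 2 = c + m ^ 2 -> Rabs m <= r ->
  exp (- c / 2) * (gauss (y + m) + gauss (- y + m)) <= gauss (y + r) + gauss (- y + r).
Proof.
  intros Hr Hm; rewrite !gauss_add_shift_opp.
  replace (exp (- c / 2) * (2 * exp (- (y ^ 2 + m ^ 2) / 2) * cosh (m * y)))
    with (2 * exp (- (y ^ 2 + r ^ 2) / 2) * cosh (m * y))
    by (rewrite Hr; replace (- (y ^ 2 + (c + m ^ 2)) / 2) with (- c / 2 + - (y ^ 2 + m ^ 2) / 2)
          by field; rewrite exp_plus; ring).
  apply Rmult_le_compat_l; [generalize (exp_pos (- (y ^ 2 + r ^ 2) / 2)); lra|].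
  apply cosh_le_of_abs_le; rewrite !Rabs_mult.
  apply Rmult_le_compat_r; [apply Rabs_pos|].
  rewrite (Rabs_right r); [exact Hm | generalize (Rabs_pos m); lra].
Qed.

Lemma ex_RInt_gauss_shift c a b : ex_RInt (fun y => gauss (y + c)) a b.
Proof. apply ex_RInt_of_ex_derive; intros y; unfold gauss; auto_derive; trivial. Qed.

Lemma I_le_gauss_int a b : 0 <= a -> 0 <= b -> I a b <= gauss_int (a + b).
Proof.
  intros Ha Hb; unfold I, gauss_int; fold gauss.
  set (r := (a + b) / 2); set (m := (b - a) / 2).
  rewrite <- (RInt_shift gauss m (- a) b), <- (RInt_shift gauss r 0 (a + b))
    by apply ex_RInt_gauss.
  replace (- a - m) with (- r) by (unfold r, m; field).
  replace (b - m) with r by (unfold r, m; field).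
  replace (0 - r) with (- r) by ring; replace (a + b - r) with r by (unfold r; field).
  rewrite !RInt_fold by apply ex_RInt_gauss_shift.
  assert (ex_fold : forall c, ex_RInt (fun y => gauss (y + c) + gauss (- y + c)) 0 r).
  { intros c; apply ex_RInt_of_ex_derive; intros y; unfold gauss; auto_derive; trivial. }
  rewrite <- (RInt_scal (V := R_CompleteNormedModule)) by apply ex_fold.
  apply RInt_le; [unfold r; lra | apply (ex_RInt_scal (V := R_NormedModule)), ex_fold
                 | apply ex_fold |].
  intros y _; apply gauss_pair_le; [unfold r, m; field | apply Rabs_le; unfold r, m; lra].
Qed.

Lemma I_t_0 t : I t 0 = gauss_int t.
Proof.
  unfold I, gauss_int; fold gauss.
  replace (- (t * 0) / 2) with 0 by field; rewrite exp_0, Rmult_1_l.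
  apply RInt_even; [apply gauss_opp | apply ex_RInt_gauss].
Qed.

Theorem mainTheorem6 :
  (forall alpha beta : R, 0 <= alpha -> 0 <= beta -> I alpha beta < sqrt (PI / 2)) /\
  is_lub (fun y => exists alpha beta : R, 0 <= alpha /\ 0 <= beta /\ y = I alpha beta)
         (sqrt (PI / 2)) /\
  is_lim (fun t => I t 0) p_infty (sqrt (PI / 2)).
Proof.
  assert (I_lt : forall a b, 0 <= a -> 0 <= b -> I a b < sqrt (PI / 2)).
  { intros a b Ha Hb; eapply Rle_lt_trans; [apply I_le_gauss_int; assumption|].
    apply gauss_int_lt; lra. }
  assert (I_lim : is_lim (fun t => I t 0) p_infty (sqrt (PI / 2))).
  { apply is_lim_ext with (f := gauss_int); [intros; symmetry; apply I_t_0 | apply is_lim_gauss_int]. }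
  split; [exact I_lt | split; [| exact I_lim]].
  apply is_lub_of_is_lim with (f := fun t => I t 0); [| | exact I_lim].
  - intros y (a & b & Ha & Hb & ->); left; apply I_lt; assumption.
  - intros t Ht; exists t, 0; repeat split; lra.
Qed.
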